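(* Let $V$ be a vertex operator algebra of central charge $C$ as described in the context, with $d=\dim V^{(1)}>0$, basis $\{u_\alpha\}$ of $V^{(1)}$ and dual basis $\{u^\alpha\}$ ($\langle u^\alpha,u_\beta\rangle=\delta^\alpha_\beta$). For $a,b\in V^{(1)}$ let $F(a,b;x,y)=\sum_\alpha\langle a,Y(u^\alpha,x)Y(u_\alpha,y)b\rangle$, which is (the expansion in $|x|>|y|$ of) a rational function $G(a,b;x,y)/(x^2y^2(x-y)^2)$ with $G$ a homogeneous symmetric polynomial of degree $4$ in $x,y$, written as $$G(a,b;x,y)=P(a,b)x^2y^2+Q(a,b)xy(x-y)^2+R(a,b)(x-y)^4.$$ Then $$P(a,b)=-d\langle a,b\rangle,\qquad Q(a,b)=K(a,b)-2\langle a,b\rangle,\qquad R(a,b)=-\langle a,b\rangle,$$ where $K(a,b)=\mathrm{Tr}_{V^{(1)}}(a_0b_0)$.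
   Context: A vertex operator algebra (VOA) $V=\bigoplus_{k\ge0}V^{(k)}$ is $\mathbb Z$-graded with $\dim V^{(k)}<\infty$, $V^{(0)}=\mathbb C\mathbf 1$, and for each $a\in V^{(k)}$ a vertex operator $Y(a,z)=\sum_{n\in\mathbb Z}a_nz^{-n-k}$ with $a_{-k}\mathbf 1=a$, $Y(\mathbf 1,z)=\mathrm{Id}_V$; there is a conformal vector $\omega\in V^{(2)}$ with $Y(\omega,z)=\sum_nL_nz^{-n-2}$, the $L_n$ satisfying the Virasoro algebra of central charge $C$, $L_0$ acting on $V^{(k)}$ as $k$, $Y(L_{-1}a,z)=\partial_zY(a,z)$, and locality holds. It is assumed that $L_1v=0$ for all $v\in V^{(1)}$ and that $V$ carries the Li–Zamolodchikov metric: the unique symmetric invariant bilinear form with $\langle\mathbf 1,\mathbf 1\rangle=1$ and $\langle Y(e^{zL_1}(-z^{-2})^{L_0}c,1/z)a,b\rangle=\langle a,Y(c,z)b\rangle$ for all $a,b,c\in V$, assumed non-degenerate. $V^{(1)}$ is a Lie algebra under $[a,b]=a_0b$, and $K$ is its Killing form $K(a,b)=\mathrm{Tr}_{V^{(1)}}(\mathrm{ad}(a)\mathrm{ad}(b))$, $\mathrm{ad}(a)=a_0|_{V^{(1)}}$. *)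

From HB Require Import structures.
From mathcomp Require Import all_boot all_order all_algebra complex.
From mathcomp Require Import Rstruct.
Set Implicit Arguments. Unset Strict Implicit. Unset Printing Implicit Defensive.
Import Order.TTheory GRing.Theory Num.Theory.
Local Open Scope ring_scope.

Notation CC := (Rdefinitions.R[i]).

Definition binz (m : int) (i : nat) : CC :=
  (\prod_(j < i) (m%:~R - j%:R)) / (i`!)%:R.

Section VOA.
Variable V : lmodType CC.
(* Vertex operators are given by their modes, in the standard indexing
   Y(a,z) = sum_n (md a n) z^(-n-1) for every a : V.  For a of weight k the
   paper's mode a_n equals md a (n + k - 1); for weight 1 they coincide. *)
Variables (vac : V) (md : V -> int -> V -> V) (om : V) (cc : CC).

(* Virasoro modes: Y(om,z) = sum_n L_n z^(-n-2) *)
Definition Lm (n : int) : V -> V := md om (n + 1).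

Definition homog (k : nat) (v : V) : Prop := Lm 0 v = k%:R *: v.

Definition is_VOA : Prop :=
  [/\
      (forall a a' n v (k : CC), md (k *: a + a') n v = k *: md a n v + md a' n v)
      /\ (forall a n v v' (k : CC), md a n (k *: v + v') = k *: md a n v + md a n v'),
      (forall a v, exists N : int, forall n : int, N <= n -> md a n v = 0),
      (forall n v, md vac n v = if n == -1 then v else 0),
      (forall a, md a (-1) vac = a) &
   [/\ (forall a (n : int), 0 <= n -> md a n vac = 0) /\
      (* Jacobi / Borcherds identity (all sums are finite: the partial sums
         stabilise, by truncation) *)
      (forall a b c (m n k : int), exists L0 : nat, forall L : nat, (L0 <= L)%N ->
         \sum_(i < L) binz m i *: md (md a (n + i%:Z) b) (m + k - i%:Z) c =
         \sum_(i < L) ((-1) ^+ i * binz n i) *: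
            (md a (m + n - i%:Z) (md b (k + i%:Z) c)
             - ((-1) ^ n) *: md b (n + k - i%:Z) (md a (m + i%:Z) c))),
      (forall (m n : int) v,
         Lm m (Lm n v) - Lm n (Lm m v) =
         (m - n)%:~R *: Lm (m + n) v
         + (if m + n == 0 then ((m ^+ 3 - m)%:~R / 12%:R * cc) *: v else 0)),
      (* translation: Y(L_{-1} a, z) = d/dz Y(a, z) *)
      (forall a (n : int) v, md (Lm (-1) a) n v = - (n%:~R) *: md a (n - 1) v),
      homog 2 om &
   [/\
      (forall v, exists s : seq V,
         (forall k, (k < size s)%N -> homog k (nth 0 s k)) /\
         v = \sum_(k < size s) nth 0 s k),
      (forall k, exists (n : nat) (e : 'I_n -> V), forall v, homog k v ->
         exists c : 'I_n -> CC, v = \sum_(i < n) c i *: e i) &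
      (forall v, homog 0 v -> exists c : CC, v = c *: vac)]]].

Definition L1_kills_V1 : Prop := forall v, homog 1 v -> Lm 1 v = 0.

(* Invariance
     <Y(e^{zL_1}(-z^{-2})^{L_0} c, 1/z) a, b> = <a, Y(c,z) b>
   written out in modes for c of weight k (extends linearly to all c). *)
Definition is_LZ_metric (form : V -> V -> CC) : Prop :=
  [/\ (forall u u' w (k : CC), form (k *: u + u') w = k * form u w + form u' w),
      (forall u w, form u w = form w u),
      form vac vac = 1,
      (forall (k : nat) c a b (n : int), homog k c ->
         form a (md c n b) =
         (-1) ^+ k * \sum_(j < k.+1)
            (j`!%:R)^-1 * form (md (iter j (Lm 1) c) (2 * k%:Z - j%:Z - n - 2) a) b) &
      (forall v, (forall w, form v w = 0) -> v = 0)].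

Definition is_basis_V1 (d : nat) (u : 'I_d -> V) : Prop :=
  [/\ forall i, homog 1 (u i),
      forall c : 'I_d -> CC, \sum_(i < d) c i *: u i = 0 -> forall i, c i = 0 &
      forall v, homog 1 v -> exists c : 'I_d -> CC, v = \sum_(i < d) c i *: u i].

Definition is_trace_V1 (d : nat) (u : 'I_d -> V) (T : V -> V) (t : CC) : Prop :=
  exists M : 'M[CC]_d,
    (forall j, T (u j) = \sum_(i < d) M i j *: u i) /\ \tr M = t.

(* coefficient of x^i y^j in
   F(a,b;x,y) = sum_alpha <a, Y(u^alpha,x) Y(u_alpha,y) b> *)
Definition corrF (form : V -> V -> CC) (d : nat) (u ud : 'I_d -> V) (a b : V)
  : int -> int -> CC :=
  fun i j => \sum_(al < d) form a (md (ud al) (- i - 1) (md (u al) (- j - 1) b)).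

End VOA.

(* Formal two-variable series: s i j = coefficient of x^i y^j (i j : int). *)
(* coefficients of iota_{x,y} (x - y)^(-2) = sum_{k >= 0} (k+1) x^(-k-2) y^k *)
Definition iota_inv_sq : int -> int -> CC :=
  fun i j => if (0 <= j) && (i == - j - 2) then (j + 1)%:~R else 0.

(* bivariate polynomials: G : {poly {poly CC}}, with G`_j`_i the coefficient
   of x^i y^j; the variables: *)
Definition px : {poly {poly CC}} := ('X : {poly CC})%:P.
Definition py : {poly {poly CC}} := 'X.

Definition mulps (G : {poly {poly CC}}) (s : int -> int -> CC) : int -> int -> CC :=
  fun i j => \sum_(jj < size G) \sum_(ii < size G`_jj)
               G`_jj`_ii * s (i - ii%:Z) (j - jj%:Z).

Definition Gpoly (P Q R : CC) : {poly {poly CC}} :=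
  P%:P%:P * px ^+ 2 * py ^+ 2 + Q%:P%:P * px * py * (px - py) ^+ 2
  + R%:P%:P * (px - py) ^+ 4.

(* coefficients of the expansion in |x| > |y| of G/(x^2 y^2 (x-y)^2) *)
Definition expandG (P Q R : CC) : int -> int -> CC :=
  fun i j => mulps (Gpoly P Q R) iota_inv_sq (i + 2) (j + 2).

From HB Require Import structures.
From mathcomp Require Import all_boot all_order all_algebra complex.
From mathcomp Require Import Rstruct.
From mathcomp Require Import ring zify.
From Stdlib Require Import FunctionalExtensionality.
Set Implicit Arguments. Unset Strict Implicit. Unset Printing Implicit Defensive.
Import Order.TTheory GRing.Theory Num.Theory.
Local Open Scope ring_scope.

(* For weight-one a, b the Borcherds identity reduces to the commutator formula
   [a_m, b_k] = (a_0 b)_(m+k) + m (a_1 b)_(m+k-1), and weights together with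
   V^(0) = C 1 give a_1 b = -<a,b> 1 and a_i b = 0 for i >= 2.  Weights also force
   the coefficient of x^i y^j in F to vanish unless i + j = -2; the remaining one,
   sum_alpha <a, u^alpha_m u_alpha,-m b> with m = j + 1, is 0 for m <= -2 and
   -<a,b> for m = -1.  For m = 0, invariance and skew-symmetry of the 0-th product
   turn it into Tr(a_0 b_0) = K.  For m >= 1 commuting the two modes leaves
   -m d <a,b> (the Casimir element sum_alpha u^alpha_0 u_alpha vanishes, again by
   skew-symmetry), plus -<a,b> when m = 1.  These are exactly the coefficients of
   the expansion of G/(x^2 y^2 (x-y)^2) in |x| > |y|. *)

Lemma sum_ord_trunc (T : nmodType) (n N : nat) (F : nat -> T) :
  (n <= N)%N -> (forall k, (n <= k)%N -> F k = 0) ->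
  \sum_(k < N) F k = \sum_(k < n) F k.
Proof.
move=> le_nN F0; rewrite (big_ord_widen N F le_nN) [RHS]big_mkcond /=.
by apply: eq_bigr => k _; case: ltnP => // /F0 ->.
Qed.

(* [G] is homogeneous of degree 4: [Gcoef P Q R j] is its coefficient of x^(4-j) y^j. *)
Definition Gcoef (P Q R : CC) (j : nat) : CC :=
  nth 0 [:: R; Q - 4 * R; P - 2 * Q + 6 * R; Q - 4 * R; R] j.

Lemma GpolyE P Q R : Gpoly P Q R =
  \poly_(j < 5) \poly_(i < 5) (if (i + j == 4)%N then Gcoef P Q R j else 0).
Proof.
rewrite poly_def !big_ord_recr big_ord0 /= !poly_def !big_ord_recr !big_ord0 /=.
rewrite /Gcoef /Gpoly /px /py -!mul_polyC !rmorphD ?rmorphM /= ?rmorphXn /=.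
by rewrite ?rmorph0 ?rmorph1; ring.
Qed.

Lemma mulps_widen (n : nat) (G : {poly {poly CC}}) (s : int -> int -> CC) (i j : int) :
  (size G <= n)%N -> (forall jj : nat, (size (G`_jj)%R <= n)%N) ->
  mulps G s i j =
  \sum_(jj < n) \sum_(ii < n) G`_jj`_ii * s (i - ii%:Z) (j - jj%:Z).
Proof.
move=> szG szGj; rewrite /mulps.
rewrite -(sum_ord_trunc (F := fun jj : nat =>
  \sum_(ii < size G`_jj) G`_jj`_ii * s (i - ii%:Z) (j - jj%:Z)) szG); last first.
  by move=> jj /(nth_default 0) ->; rewrite size_poly0 big_ord0.
apply: eq_bigr => jj _; symmetry.
apply: (sum_ord_trunc (F := fun ii : nat => G`_jj`_ii * s (i - ii%:Z) (j - jj%:Z))) => //.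
by move=> ii /(nth_default 0) ->; rewrite mul0r.
Qed.

Definition Gdiag (P Q R : CC) (m : int) : CC :=
  if m <= -2 then 0 else if m == -1 then R else if m == 0 then Q - 2 * R
  else if m == 1 then P + R else m%:~R * P.

Ltac decide_ifs := repeat match goal with |- context [if ?b then _ else _] =>
  first [have -> : b = true by lia | have -> : b = false by lia] end.

Lemma expandGE P Q R i j :
  expandG P Q R i j = if i + j == -2 then Gdiag P Q R (j + 1) else 0.
Proof.
rewrite /expandG GpolyE (mulps_widen (n := 5)); first last.
- by move=> jj; rewrite coef_poly; case: ifP => _; rewrite ?size_poly ?size_poly0.
- exact: size_poly.
rewrite !big_ord_recr !big_ord0 /= !coef_poly /= /Gcoef /= /iota_inv_sq /Gdiag.
rewrite ?mul0r ?add0r ?addr0.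
case: (i + j =P -2) => hij; last by decide_ifs; ring.
have -> : i = - j - 2 by lia.
have : j <= -3 \/ j = -2 \/ j = -1 \/ j = 0 \/ j = 1 \/ 2 <= j by lia.
by case=> [hj|[->|[->|[->|[->|hj]]]]]; decide_ifs; ring.
Qed.

Lemma binz0 m : binz m 0 = 1.
Proof. by rewrite /binz big_ord0 divr1. Qed.

Lemma binz1 m : binz m 1 = m%:~R.
Proof. by rewrite /binz big_ord1 subr0 divr1. Qed.

Lemma binz_gt (k i : nat) : (k < i)%N -> binz k i = 0.
Proof. by move=> lt_ki; rewrite /binz (bigD1 (Ordinal lt_ki)) //= subrr !mul0r. Qed.

Section VOA.
Variable V : lmodType CC.
Variables (vac om : V) (md : V -> int -> V -> V) (cc : CC) (form : V -> V -> CC).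
Hypothesis hV : is_VOA vac md om cc.
Hypothesis hL1 : L1_kills_V1 md om.
Hypothesis hform : is_LZ_metric vac md om form.

Local Notation hom := (homog md om).
Local Notation L := (Lm md om).

(* [homog k] is convertible to [has_wt k]; integer weights let us say that vectors
   of negative weight vanish. *)
Definition has_wt (mu : int) (v : V) : Prop := L 0 v = mu%:~R *: v.

Lemma mdDZl a a' n v (k : CC) : md (k *: a + a') n v = k *: md a n v + md a' n v.
Proof. by case: hV => [[]]. Qed.

Lemma mdDZr a n v v' (k : CC) : md a n (k *: v + v') = k *: md a n v + md a n v'.
Proof. by case: hV => [[]]. Qed.

Lemma md0l n v : md 0 n v = 0.
Proof.
have := mdDZl 0 0 n v 1; rewrite scaler0 addr0 scale1r -{1}[md 0 n v]addr0.
by move=> /addrI <-.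
Qed.

Lemma md0r a n : md a n 0 = 0.
Proof.
have := mdDZr a n 0 0 1; rewrite scaler0 addr0 scale1r -{1}[md a n 0]addr0.
by move=> /addrI <-.
Qed.

Lemma mdZl k a n v : md (k *: a) n v = k *: md a n v.
Proof. by have := mdDZl a 0 n v k; rewrite !addr0 md0l addr0. Qed.

Lemma mdDl a a' n v : md (a + a') n v = md a n v + md a' n v.
Proof. by have := mdDZl a a' n v 1; rewrite !scale1r. Qed.

Lemma mdZr k a n v : md a n (k *: v) = k *: md a n v.
Proof. by have := mdDZr a n v 0 k; rewrite !addr0 md0r addr0. Qed.

Lemma mdDr a n v v' : md a n (v + v') = md a n v + md a n v'.
Proof. by have := mdDZr a n v v' 1; rewrite !scale1r. Qed.

Lemma md_suml (I : Type) (r : seq I) (P : pred I) (F : I -> V) n v :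
  md (\sum_(i <- r | P i) F i) n v = \sum_(i <- r | P i) md (F i) n v.
Proof. exact: (big_morph (fun a => md a n v) (fun a b => mdDl a b n v) (md0l n v)). Qed.

Lemma md_sumr (I : Type) (r : seq I) (P : pred I) (F : I -> V) a n :
  md a n (\sum_(i <- r | P i) F i) = \sum_(i <- r | P i) md a n (F i).
Proof. exact: (big_morph (fun v => md a n v) (fun v w => mdDr a n v w) (md0r a n)). Qed.

Lemma md_vacl n v : md vac n v = if n == -1 then v else 0.
Proof. by case: hV. Qed.

Lemma md_vacr_m1 a : md a (-1) vac = a.
Proof. by case: hV. Qed.

Lemma md_vacr_ge0 a n : 0 <= n -> md a n vac = 0.
Proof. by case: hV => _ _ _ _ [[h _] _ _ _ _]; apply: h. Qed.

Lemma borcherds a b c (m n k : int) : exists N : nat, forall M : nat, (N <= M)%N ->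
  \sum_(i < M) binz m i *: md (md a (n + i%:Z) b) (m + k - i%:Z) c =
  \sum_(i < M) ((-1) ^+ i * binz n i) *:
     (md a (m + n - i%:Z) (md b (k + i%:Z) c)
      - ((-1) ^ n) *: md b (n + k - i%:Z) (md a (m + i%:Z) c)).
Proof. by case: hV => _ _ _ _ [[_ h] _ _ _ _]; apply: h. Qed.

Lemma virasoro (m n : int) v :
  L m (L n v) - L n (L m v) =
  (m - n)%:~R *: L (m + n) v
  + (if m + n == 0 then ((m ^+ 3 - m)%:~R / 12%:R * cc) *: v else 0).
Proof. by case: hV => _ _ _ _ [_ h _ _ _]; apply: h. Qed.

Lemma md_Lm1 a n v : md (md om 0 a) n v = - n%:~R *: md a (n - 1) v.
Proof. by case: hV => _ _ _ _ [_ _ /(_ a n v) + _ _]; rewrite /Lm addNr. Qed.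

Lemma homog_om : hom 2 om.
Proof. by case: hV => _ _ _ _ [_ _ _ h _]. Qed.

Lemma homog_decomposition v : exists s : seq V,
  (forall k, (k < size s)%N -> hom k (nth 0 s k)) /\ v = \sum_(k < size s) nth 0 s k.
Proof. by case: hV => _ _ _ _ [_ _ _ _ [h _ _]]; apply: h. Qed.

Lemma homog0_vac v : hom 0 v -> exists c : CC, v = c *: vac.
Proof. by case: hV => _ _ _ _ [_ _ _ _ [_ _ h]]; apply: h. Qed.

Lemma formDZl u u' w (k : CC) : form (k *: u + u') w = k * form u w + form u' w.
Proof. by case: hform => h _ _ _ _; apply: h. Qed.

Lemma form_sym u w : form u w = form w u.
Proof. by case: hform => _ h _ _ _; apply: h. Qed.

Lemma form_vac : form vac vac = 1.
Proof. by case: hform. Qed.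

Lemma form_nondeg v : (forall w, form v w = 0) -> v = 0.
Proof. by case: hform => _ _ _ _ h; apply: h. Qed.

Lemma form_invariant (k : nat) c a b (n : int) : hom k c ->
  form a (md c n b) = (-1) ^+ k * \sum_(j < k.+1)
     (j`!%:R)^-1 * form (md (iter j (L 1) c) (2 * k%:Z - j%:Z - n - 2) a) b.
Proof. by case: hform => _ _ _ h _; apply: h. Qed.

Lemma form0l w : form 0 w = 0.
Proof.
have := formDZl 0 0 w 1; rewrite scaler0 addr0 mul1r -{1}[form 0 w]addr0.
by move=> /addrI <-.
Qed.

Lemma formZl k u w : form (k *: u) w = k * form u w.
Proof. by have := formDZl u 0 w k; rewrite !addr0 form0l addr0. Qed.

Lemma formDl u u' w : form (u + u') w = form u w + form u' w.
Proof. by have := formDZl u u' w 1; rewrite scale1r mul1r. Qed.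

Lemma form0r w : form w 0 = 0.
Proof. by rewrite form_sym form0l. Qed.

Lemma formZr k u w : form w (k *: u) = k * form w u.
Proof. by rewrite form_sym formZl form_sym. Qed.

Lemma formDr u u' w : form w (u + u') = form w u + form w u'.
Proof. by rewrite form_sym formDl !(form_sym w). Qed.

Lemma form_suml (I : Type) (r : seq I) (P : pred I) (F : I -> V) w :
  form (\sum_(i <- r | P i) F i) w = \sum_(i <- r | P i) form (F i) w.
Proof. exact: (big_morph (fun a => form a w) (fun a b => formDl a b w) (form0l w)). Qed.

Lemma form_sumr (I : Type) (r : seq I) (P : pred I) (F : I -> V) w :
  form w (\sum_(i <- r | P i) F i) = \sum_(i <- r | P i) form w (F i).
Proof. exact: (big_morph (fun a => form w a) (fun a b => formDr a b w) (form0r w)). Qed.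

Lemma L0E v : L 0 v = md om 1 v.
Proof. by rewrite /Lm add0r. Qed.

(* [L_1, L_(-2)] 1 = 3 L_(-1) 1 = 0 and L_(-2) 1 = om. *)
Lemma L1_om : L 1 om = 0.
Proof.
have := virasoro 1 (-2) vac; rewrite /Lm.
rewrite (_ : -2 + 1 = -1 :> int) // (_ : 1 + 1 = 2 :> int) // (_ : 1 + -2 + 1 = 0 :> int) //.
rewrite (_ : (1 + -2 == 0 :> int) = false) // md_vacr_m1 !md_vacr_ge0 // md0r.
by rewrite subr0 scaler0 addr0.
Qed.

Lemma form_L0_sym x v : form x (L 0 v) = form (L 0 x) v.
Proof.
rewrite {1}/Lm (form_invariant _ _ _ homog_om) !big_ord_recr big_ord0 /= L1_om.
rewrite md0l form0l /Lm md0r !md0l !form0l !mulr0 !addr0 add0r expr2 mulN1r opprK.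
by rewrite mul1r invr1 mul1r; congr (form (md om _ x) v); lia.
Qed.

Lemma form_has_wt_orth (k : nat) x v mu : hom k x -> has_wt mu v -> mu != k ->
  form x v = 0.
Proof.
move=> hx hv neq_mu_k; have := form_L0_sym x v; rewrite hv hx formZr formZl => e.
have /eqP : (mu%:~R - k%:R) * form x v = 0 by rewrite mulrBl e subrr.
rewrite mulf_eq0 => /orP[|/eqP //].
by rewrite -[k%:R]/((k%:Z)%:~R : CC) -intrB intr_eq0 subr_eq0 (negbTE neq_mu_k).
Qed.

Lemma has_wt_form_eq0 v mu : has_wt mu v ->
  (forall (k : nat) c, k%:Z = mu -> hom k c -> form c v = 0) -> v = 0.
Proof.
move=> hv hc; apply: form_nondeg => w; rewrite form_sym.
have [s [hs ->]] := homog_decomposition w; rewrite form_suml big1 // => k _.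
have [eq_mu_k|] := eqVneq mu k; first exact: hc (esym eq_mu_k) (hs _ (ltn_ord k)).
exact: form_has_wt_orth (hs _ (ltn_ord k)) hv.
Qed.

Lemma has_wt_lt0 v mu : has_wt mu v -> mu < 0 -> v = 0.
Proof. by move=> hv mu_lt0; apply: (has_wt_form_eq0 hv) => k c k_mu; lia. Qed.

Lemma commutator_md a b c (m k : int) : exists N : nat, forall M : nat, (N <= M)%N ->
  \sum_(i < M) binz m i *: md (md a i%:Z b) (m + k - i%:Z) c
   = md a m (md b k c) - md b k (md a m c).
Proof.
have [N hN] := borcherds a b c m 0 k; exists N.+1 => -[|M] //; rewrite ltnS => leNM.
under eq_bigr do rewrite -[_%:Z]add0r.
rewrite hN ?(leqW leNM) // big_ord_recl big1 => [|i _]; last first.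
  by rewrite binz_gt // mulr0 scale0r.
by rewrite binz0 expr0 mul1r expr0z !scale1r /= !addr0 add0r.
Qed.

Lemma has_wt_md c v n mu : hom 1 c -> has_wt mu v -> has_wt (mu - n) (md c n v).
Proof.
move=> hc hv; have [N hN] := commutator_md om c v 1 n.
have := hN N.+2 (leqW (leqnSn N)).
rewrite 2!big_ord_recl big1 => [|i _]; last by rewrite binz_gt // scale0r.
rewrite !lift0 /= binz0 binz1 !scale1r addr0 md_Lm1 -[md om _ c]L0E hc scale1r.
rewrite -!L0E hv mdZr (_ : 1 + n - 1 = n); last by lia.
rewrite addr0 => /eqP; rewrite eq_sym subr_eq => /eqP; rewrite /has_wt => ->.
rewrite (_ : (mu - n)%:~R = - (1 + n)%:~R + 1 + mu%:~R :> CC).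
  by rewrite !scalerDl scale1r.
by rewrite !intrD intrN; ring.
Qed.

Lemma homog1_md0 c v : hom 1 c -> hom 1 v -> hom 1 (md c 0 v).
Proof. by move=> hc hv; have := has_wt_md (mu := 1) 0 hc hv; rewrite subr0. Qed.

Lemma form_md_wt1 c x y n : hom 1 c -> form x (md c n y) = - form (md c (- n) x) y.
Proof.
move=> hc; rewrite (form_invariant _ _ _ hc) big_ord_recr big_ord1 /= (hL1 hc).
rewrite md0l form0l mulr0 addr0 expr1 invr1 mul1r mulN1r.
by congr (- form (md c _ x) y); lia.
Qed.

Lemma form_md0_wt1 c x y : hom 1 c -> form x (md c 0 y) = - form (md c 0 x) y.
Proof. by move=> hc; rewrite form_md_wt1 // oppr0. Qed.

Lemma md1_wt1 a b : hom 1 a -> hom 1 b -> md a 1 b = (- form a b) *: vac.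
Proof.
move=> ha hb; have [c hc] := homog0_vac (has_wt_md (mu := 1) 1 ha hb).
rewrite hc; congr (_ *: _).
by rewrite -[c]mulr1 -form_vac -formZr -hc form_md_wt1 // md_vacr_m1.
Qed.

Lemma md_wt1_gt1 a b (i : int) : hom 1 a -> hom 1 b -> 2 <= i -> md a i b = 0.
Proof. by move=> ha hb i_ge2; apply: (has_wt_lt0 (has_wt_md (mu := 1) i ha hb)); lia. Qed.

Lemma commutator_wt1 a b c (m k : int) : hom 1 a -> hom 1 b ->
  md a m (md b k c) - md b k (md a m c)
  = md (md a 0 b) (m + k) c + m%:~R *: md (md a 1 b) (m + k - 1) c.
Proof.
move=> ha hb; have [N hN] := commutator_md a b c m k.
rewrite -(hN N.+2 (leqW (leqnSn N))).
rewrite 2!big_ord_recl big1 => [|i _]; last first.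
  by rewrite (md_wt1_gt1 ha hb) ?md0l ?scaler0 // !lift0; lia.
by rewrite !lift0 /= !addr0 binz0 binz1 scale1r.
Qed.

Lemma form_md1_vac x y : hom 1 x -> form x y = - form (md x 1 y) vac.
Proof. by move=> hx; rewrite form_sym -{1}(md_vacr_m1 x) form_md_wt1 // opprK. Qed.

Lemma form_md0_invariant x u v : hom 1 x -> hom 1 u -> hom 1 v ->
  form x (md u 0 v) = form (md x 0 u) v.
Proof.
move=> hx hu hv; rewrite form_md1_vac //.
have := commutator_wt1 v 1 0 hx hu.
rewrite (md1_wt1 hx hv) mdZr md_vacr_ge0 // scaler0 subr0 (md1_wt1 hx hu) mdZl md_vacl /=.
rewrite !scaler0 !addr0 => ->.
by rewrite (md1_wt1 (homog1_md0 hx hu) hv) formZl form_vac mulr1 opprK.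
Qed.

Lemma form_md0_skew x u v : hom 1 x -> hom 1 u -> hom 1 v ->
  form x (md u 0 v) = - form x (md v 0 u).
Proof.
move=> hx hu hv; rewrite (form_md0_invariant hx hv hu) [form (md x 0 v) u]form_sym.
by rewrite (form_md0_wt1 u v hx) -(form_md0_invariant hx hu hv) opprK.
Qed.

Lemma homog_sum k (I : Type) (r : seq I) (P : pred I) (F : I -> V) :
  (forall i, hom k (F i)) -> hom k (\sum_(i <- r | P i) F i).
Proof.
by move=> hF; rewrite /homog /Lm md_sumr scaler_sumr; apply: eq_bigr => i _; apply: hF.
Qed.

Section DualBases.
Variables (d : nat) (u ud : 'I_d -> V).
Hypothesis hu : is_basis_V1 md om u.
Hypothesis hud1 : forall i, hom 1 (ud i).
Hypothesis hud : forall i j, form (ud i) (u j) = if i == j then 1 else 0.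

Lemma homog_basis i : hom 1 (u i).
Proof. by case: hu. Qed.

Lemma form_dual_coord (c : 'I_d -> CC) i : form (ud i) (\sum_j c j *: u j) = c i.
Proof.
rewrite form_sumr (bigD1 i) //= formZr hud eqxx mulr1 big1 ?addr0 // => j ne_ji.
by rewrite formZr hud eq_sym (negbTE ne_ji) mulr0.
Qed.

Lemma dual_basis_expand y : hom 1 y -> y = \sum_al form (ud al) y *: u al.
Proof.
case: hu => _ _ span /span [c ->].
by apply: eq_bigr => i _; rewrite form_dual_coord.
Qed.

Lemma form_dual_basis x y : hom 1 x ->
  form x y = \sum_al form (ud al) x * form (u al) y.
Proof.
move=> hx; rewrite {1}(dual_basis_expand hx) form_suml.
by apply: eq_bigr => al _; rewrite formZl.
Qed.

Definition casimir0 : V := \sum_(al < d) md (ud al) 0 (u al).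

Lemma form_casimir0 c : hom 1 c -> form c casimir0 = 0.
Proof.
move=> hc; set S := form c casimir0.
have S_sum : S = \sum_al \sum_g form (ud g) (ud al) * form c (md (u g) 0 (u al)).
  rewrite /S form_sumr; apply: eq_bigr => al _.
  rewrite {1}(dual_basis_expand (hud1 al)) md_suml form_sumr.
  by apply: eq_bigr => g _; rewrite mdZl formZr.
have S_opp : S = - S.
  rewrite {1}S_sum exchange_big S_sum -sumrN; apply: eq_bigr => g _ /=.
  rewrite -sumrN; apply: eq_bigr => al _.
  (* <u^g, u^al> is symmetric in (al, g), <c, u_g,0 u_al> antisymmetric. *)
  by rewrite (form_md0_skew hc (homog_basis g) (homog_basis al)) mulrN form_sym.
have : S *+ 2 = 0 by rewrite mulr2n {1}S_opp addNr.
by move/eqP; rewrite mulrn_eq0 => /eqP.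
Qed.

Lemma casimir0_eq0 : casimir0 = 0.
Proof.
have hcas : hom 1 casimir0.
  by apply: homog_sum => al; exact: homog1_md0 (hud1 al) (homog_basis al).
apply: (has_wt_form_eq0 (mu := 1) hcas) => k c [->] hc.
exact: form_casimir0.
Qed.

Section Correlator.
Variables a b : V.
Hypotheses (ha : hom 1 a) (hb : hom 1 b).

Definition corr_diag (m : int) : CC :=
  \sum_(al < d) form a (md (ud al) m (md (u al) (- m) b)).

Lemma corrFE i j :
  corrF md form u ud a b i j = if i + j == -2 then corr_diag (j + 1) else 0.
Proof.
rewrite /corrF /corr_diag; case: (i + j =P -2) => ij.
  have -> : - i - 1 = j + 1 by lia.
  by have -> : - j - 1 = - (j + 1) by lia.
apply: big1 => al _; apply: (form_has_wt_orth (mu := i + j + 3) ha); last by lia.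
have := has_wt_md (- i - 1) (hud1 al) (has_wt_md (mu := 1) (- j - 1) (homog_basis al) hb).
by have -> : 1 - (- j - 1) - (- i - 1) = i + j + 3 by lia.
Qed.

Lemma corr_diag_le_m2 m : m <= -2 -> corr_diag m = 0.
Proof.
move=> m_le; apply: big1 => al _.
rewrite (has_wt_lt0 (has_wt_md (mu := 1) (- m) (homog_basis al) hb)) ?md0r ?form0r //.
lia.
Qed.

Lemma corr_diag_m1 : corr_diag (-1) = - form a b.
Proof.
rewrite /corr_diag opprK (form_dual_basis _ ha) -sumrN; apply: eq_bigr => al _.
by rewrite (md1_wt1 (homog_basis al) hb) mdZr md_vacr_m1 formZr mulNr mulrC form_sym.
Qed.

Lemma corr_diag_0 K : is_trace_V1 u (fun v => md a 0 (md b 0 v)) K -> corr_diag 0 = K.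
Proof.
move=> [M [hM <-]]; apply: eq_bigr => al _; rewrite oppr0.
have hbal := homog1_md0 (homog_basis al) hb; have hal := hud1 al.
rewrite (form_md0_wt1 a _ hal) form_sym (form_md0_skew hbal hal ha) opprK form_sym.
rewrite (form_md0_skew (homog1_md0 ha hal) (homog_basis al) hb).
by rewrite -(form_md0_wt1 _ _ ha) hM form_dual_coord.
Qed.

Lemma corr_diag_commute m : corr_diag m =
  - (m%:~R * d%:R * form a b) + \sum_al form a (md (u al) (- m) (md (ud al) m b)).
Proof.
have commE al : md (ud al) m (md (u al) (- m) b) =
    md (md (ud al) 0 (u al)) 0 b + (- m%:~R) *: b + md (u al) (- m) (md (ud al) m b).
  move/eqP: (commutator_wt1 b m (- m) (hud1 al) (homog_basis al)).
  rewrite subr_eq => /eqP ->; rewrite addrN sub0r (md1_wt1 (hud1 al) (homog_basis al)).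
  by rewrite hud eqxx mdZl md_vacl eqxx scalerA mulrN1.
rewrite /corr_diag (eq_bigr _ (fun al _ => congr1 (form a) (commE al))).
under eq_bigr do rewrite !formDr formZr.
rewrite !big_split /= -form_sumr -md_suml -/casimir0 casimir0_eq0 md0l form0r add0r.
by rewrite sumr_const card_ord; ring.
Qed.

Lemma corr_diag_1 : corr_diag 1 = - (d%:R * form a b) - form a b.
Proof.
rewrite corr_diag_commute mulr1z mul1r; congr (_ + _).
rewrite [form a b]form_sym (form_dual_basis a hb) -sumrN; apply: eq_bigr => al _.
by rewrite (md1_wt1 (hud1 al) hb) mdZr md_vacr_m1 formZr mulNr [form a _]form_sym.
Qed.

Lemma corr_diag_gt1 m : 2 <= m -> corr_diag m = m%:~R * - (d%:R * form a b).
Proof.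
move=> m_ge2; rewrite corr_diag_commute big1 ?addr0 => [|al _].
  by rewrite mulrN mulrA.
by rewrite (md_wt1_gt1 (hud1 al) hb m_ge2) md0r form0r.
Qed.

Lemma corr_diag_Gdiag K m : is_trace_V1 u (fun v => md a 0 (md b 0 v)) K ->
  corr_diag m = Gdiag (- (d%:R * form a b)) (K - 2 * form a b) (- form a b) m.
Proof.
move=> hK; rewrite /Gdiag; have [/corr_diag_le_m2 //|gt_m] := leP m (-2).
have [->|ne_m_m1] := eqVneq m (-1); first exact: corr_diag_m1.
have [->|ne_m0] := eqVneq m 0; first by rewrite (corr_diag_0 hK); ring.
have [->|ne_m1] := eqVneq m 1; first exact: corr_diag_1.
by apply: corr_diag_gt1; lia.
Qed.

End Correlator.
End DualBases.
End VOA.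

Theorem proposition2 (V : lmodType CC) (vac om : V) (md : V -> int -> V -> V)
  (cc : CC) (form : V -> V -> CC)
  (hV : is_VOA vac md om cc) (hL1 : L1_kills_V1 md om)
  (hform : is_LZ_metric vac md om form)
  (d : nat) (hd : (0 < d)%N) (u ud : 'I_d -> V)
  (hu : is_basis_V1 md om u)
  (hud1 : forall i, homog md om 1 (ud i))
  (hud : forall i j, form (ud i) (u j) = if i == j then 1 else 0)
  (a b : V) (ha : homog md om 1 a) (hb : homog md om 1 b)
  (K : CC) (hK : is_trace_V1 u (fun v => md a 0 (md b 0 v)) K) :
  corrF md form u ud a b =
  expandG (- (d%:R * form a b)) (K - 2 * form a b) (- form a b).
Proof.
apply: functional_extensionality => i; apply: functional_extensionality => j.
rewrite expandGE (corrFE hV hform hu hud1 ha hb); case: eqP => // _.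
exact: (corr_diag_Gdiag hV hL1 hform hu hud1 hud ha hb _ hK).
Qed.
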